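(* Let $r$ be a tensor rank function. Then for every $\mathscr X\in\mathcal T$, $r(\mathscr X)=0$ if and only if $\mathscr X=\mathbf 0$.
   Context: $\mathcal T$ is the collection of all real tensors. A rank-one tensor is one of the form $x_{i_1\cdots i_N}=a^{(1)}_{i_1}\cdots a^{(N)}_{i_N}$ with all $\mathbf a^{(n)}$ nonzero vectors. $\mathscr I_{M,N}$ is the order-$N$ tensor of size $M\times\cdots\times M$ with $1$ in positions $(i,\dots,i)$ and $0$ elsewhere. The mode-$n$ product of $\mathscr X\in\mathbb R^{I_1\times\cdots\times I_N}$ with $\mathbf A\in\mathbb R^{J\times I_n}$ is $\mathscr X\times_n\mathbf A$ with entries $\sum_{i_n=1}^{I_n}x_{i_1\cdots i_N}a_{j i_n}$ at position $(i_1,\dots,i_{n-1},j,i_{n+1},\dots,i_N)$. A tensor rank function is a function $r:\mathcal T\to\mathbb N\cup\{0\}$ such that: (TR1) $r(\mathscr X)=1$ iff $\mathscr X$ is rank-one; (TR2) $r(\mathscr I_{M,N})=M$ whenever $N\ge2$; (TR3) for a matrix $\mathscr X\in\mathbb R^{I_1\times I_2}$, $r(\mathscr X)$ is its matrix rank; (TR4) if $\mathscr X\in\mathbb R^{I_1\times\cdots\times I_N}$ and $\mathscr X'$ is the corresponding tensor in $\mathbb R^{I_1\times\cdots\times I_N\times1}$, then $r(\mathscr X)=r(\mathscr X')$; (TR5) for $\pi\in S_N$, the tensor $\mathscr Y$ with $y_{i_1\cdots i_N}=x_{i_{\pi(1)}\cdots i_{\pi(N)}}$ satisfies $r(\mathscr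 Y)=r(\mathscr X)$; (TR6) $r(\mathscr X\times_n\mathbf A)\le r(\mathscr X)$ for all $\mathscr X\in\mathbb R^{I_1\times\cdots\times I_N}$, $n$, and $\mathbf A\in\mathbb R^{J\times I_n}$. *)

From HB Require Import structures.
From mathcomp Require Import all_boot all_order all_algebra all_fingroup.
From mathcomp Require Import reals.
Set Implicit Arguments. Unset Strict Implicit. Unset Printing Implicit Defensive.
Import Order.TTheory GRing.Theory Num.Theory.
Local Open Scope ring_scope.

(* A tensor is given by its size list [tdim] (of length N >= 1) and its
   entries [tval], indexed by lists of (0-based) indices; multi-indices i
   with i_k < I_k for all k (predicate [inb]) are the genuine positions,
   and [tval] is required to vanish elsewhere (so that tensors with the
   same sizes and the same entries are equal). *)

Definition inb (d i : seq nat) : bool := all2 (fun a b => (a < b)%N) i d.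

Section Tensors.
Variable R : realType.

Record tensor := Tensor {
  tdim : seq nat;
  tdim_gt0 : (0 < size tdim)%N;
  tval : seq nat -> R;
  tval_out : forall i, ~~ inb tdim i -> tval i = 0 }.

Lemma mkT_out (d : seq nat) (f : seq nat -> R) i :
  ~~ inb d i -> (if inb d i then f i else 0) = 0.
Proof. by move/negbTE=> ->. Qed.

Definition mkT (d : seq nat) (h : (0 < size d)%N) (f : seq nat -> R) : tensor :=
  @Tensor d h (fun i => if inb d i then f i else 0) (@mkT_out d f).

Definition zeroT (X : tensor) : tensor := mkT (tdim_gt0 X) (fun _ => 0).

Definition rank_one (X : tensor) : Prop :=
  exists a : nat -> nat -> R,
    (forall k, (k < size (tdim X))%N ->
       exists2 j, (j < nth 0%N (tdim X) k)%N & a k j != 0) /\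
    (forall i, inb (tdim X) i ->
       tval X i = \prod_(k < size (tdim X)) a k (nth 0%N i k)).

(* I_{M,N} with N = n.+2 >= 2 *)
Lemma size_nseq_gt0 (n M : nat) : (0 < size (nseq n.+2 M))%N.
Proof. by rewrite size_nseq. Qed.

Definition idT (M n : nat) : tensor :=
  mkT (size_nseq_gt0 n M)
      (fun i => if all (fun x => x == head 0%N i) i then 1 else 0).

Definition mxT (m n : nat) (A : 'M[R]_(m, n)) : tensor :=
  @mkT [:: m; n] isT
    (fun i => match insub (nth 0%N i 0) : option 'I_m,
                    insub (nth 0%N i 1) : option 'I_n with
              | Some a, Some b => A a b
              | _, _ => 0 end).

Lemma size_rcons_gt0 (d : seq nat) (x : nat) : (0 < size (rcons d x))%N.
Proof. by rewrite size_rcons. Qed.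

Definition extT (X : tensor) : tensor :=
  mkT (size_rcons_gt0 (tdim X) 1)
      (fun i => tval X (take (size (tdim X)) i)).

(* y_{i_1..i_N} = x_{i_{pi(1)} .. i_{pi(N)}}; the k-th index of X is the
   pi(k)-th index of Y, so Y has size I_{pi^-1(1)} x ... x I_{pi^-1(N)} *)
Lemma size_perm_gt0 (X : tensor) (s : 'S_(size (tdim X))) :
  (0 < size [seq nth 0%N (tdim X) (s^-1%g j) | j <- enum 'I_(size (tdim X))])%N.
Proof. by rewrite size_map size_enum_ord tdim_gt0. Qed.

Definition permT (X : tensor) (s : 'S_(size (tdim X))) : tensor :=
  mkT (size_perm_gt0 s)
      (fun i => tval X [seq nth 0%N i (s k) | k <- enum 'I_(size (tdim X))]).

(* mode-n product X x_n A, A in R^{J x I_n} (n is a 0-based mode index) *)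
Lemma size_set_nth_gt0 (X : tensor) (n J : nat) :
  (0 < size (set_nth 0%N (tdim X) n J))%N.
Proof. by rewrite size_set_nth leq_max. Qed.

Definition modeT (X : tensor) (n J : nat) (A : 'M[R]_(J, nth 0%N (tdim X) n)) : tensor :=
  mkT (size_set_nth_gt0 X n J)
      (fun i => \sum_(t < nth 0%N (tdim X) n)
                  tval X (set_nth 0%N i n t) *
                  match insub (nth 0%N i n) : option 'I_J with
                  | Some j => A j t | None => 0 end).

Definition is_tensor_rank_fn (r : tensor -> nat) : Prop :=
  (forall X, r X = 1%N <-> rank_one X) /\
  (forall M n, r (idT M n) = M) /\
  (forall m n (A : 'M[R]_(m, n)), r (mxT A) = \rank A) /\
  (forall X, r X = r (extT X)) /\
  (forall X (s : 'S_(size (tdim X))), r (permT s) = r X) /\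
  (forall X (n : 'I_(size (tdim X))) J
               (A : 'M[R]_(J, nth 0%N (tdim X) n)), (r (modeT A) <= r X)%N).

End Tensors.

From mathcomp Require Import all_boot all_order all_algebra all_fingroup.
From mathcomp Require Import boolp reals.
Set Implicit Arguments. Unset Strict Implicit. Unset Printing Implicit Defensive.
Import GRing.Theory.
Local Open Scope ring_scope.

(* Mode products never increase the rank (TR6).  If x_i != 0, multiplying
   every mode n by the selection row e_(i_n)^T yields a 1 x ... x 1 tensor
   with the nonzero entry x_i, which is rank-one; hence r(X) >= 1 by TR1.
   Conversely, mode products of a zero tensor are zero and can reach every
   shape of the same order, so all zero tensors of order N >= 2 have the rank
   of I_(0,N), which is 0 by TR2; order 1 reduces to order 2 by TR4. *)

Section Interpolation.
Variables (T : eqType) (x0 : T).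

(* Shapes and multi-indices after the first k modes have been rewritten. *)
Definition interp (a b : seq T) (k : nat) : seq T :=
  mkseq (fun j => nth x0 (if (j < k)%N then b else a) j) (size a).

Variables a b : seq T.
Hypothesis size_ab : size a = size b.

Lemma size_interp k : size (interp a b k) = size a.
Proof. by rewrite size_mkseq. Qed.

Lemma nth_interp k j :
  nth x0 (interp a b k) j = nth x0 (if (j < k)%N then b else a) j.
Proof.
have [ja|aj] := ltnP j (size a); first by rewrite nth_mkseq.
by rewrite !nth_default ?size_interp //; case: ifP; rewrite -?size_ab.
Qed.

Lemma interp0 : interp a b 0 = a.
Proof. by apply: (@eq_from_nth _ x0) => [|j _]; rewrite ?size_interp ?nth_interp. Qed.

Lemma interp_size : interp a b (size a) = b.
Proof.
apply: (@eq_from_nth _ x0) => [|j]; rewrite size_interp // => ja.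
by rewrite nth_interp ja.
Qed.

Lemma set_nth_interp k :
  (k < size a)%N -> set_nth x0 (interp a b k) k (nth x0 b k) = interp a b k.+1.
Proof.
move=> ka; apply: (@eq_from_nth _ x0) => [|j _].
  by rewrite size_set_nth !size_interp; apply/maxn_idPr.
rewrite nth_set_nth /= !nth_interp ltnS (leq_eqVlt j k).
by have [->|] := eqVneq j k.
Qed.

Lemma set_nth_interpS k :
  (k < size a)%N -> set_nth x0 (interp a b k.+1) k (nth x0 a k) = interp a b k.
Proof.
move=> ka; apply: (@eq_from_nth _ x0) => [|j _].
  by rewrite size_set_nth !size_interp; apply/maxn_idPr.
rewrite nth_set_nth /= !nth_interp ltnS (leq_eqVlt j k).
by have [->|] := eqVneq j k; rewrite ?ltnn.
Qed.

End Interpolation.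

Lemma inbE d i : inb d i <->
  size i = size d /\ (forall j, (j < size d)%N -> (nth 0 i j < nth 0 d j)%N).
Proof.
elim: d i => [|x d IH] [|y i] /=; [by split..|by split=> // -[]|by split=> // -[]|].
rewrite /inb /=; split.
- move/andP=> [yx /IH [si lti]]; split; first by rewrite si.
  by case=> [|j] //= ?; apply: lti.
- case=> [/succn_inj si lti]; apply/andP; split; first exact: (lti 0%N).
  by apply/IH; split=> // j jd; exact: (lti j.+1 jd).
Qed.

Lemma inb_interp d d' i i' k : size d = size d' ->
  inb d i -> inb d' i' -> inb (interp 0%N d d' k) (interp 0%N i i' k).
Proof.
move=> sd /inbE[si lti] /inbE[si' lti']; apply/inbE.
rewrite !size_interp; split=> // j jd.
by rewrite !nth_interp ?si ?si' //; case: ifP => _; [apply: lti'; rewrite -sd | apply: lti].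
Qed.

Lemma inb_ones N : inb (nseq N 1%N) (nseq N 0%N).
Proof. by elim: N. Qed.

Section Tensors.
Variable R : realType.
Implicit Types X Y Z : tensor R.

Lemma tensor_ext X Y : tdim X = tdim Y -> tval X =1 tval Y -> X = Y.
Proof.
case: X => d h f o; case: Y => d' h' f' o' /= dd' /funext ff'.
by subst d' f'; rewrite (Prop_irrelevance h h') (Prop_irrelevance o o').
Qed.

Lemma eq_zeroT X : X = zeroT X <-> tval X =1 (fun _ => 0).
Proof.
split=> [-> i /=|X0]; first by case: ifP.
by apply: tensor_ext => // i /=; rewrite X0; case: ifP.
Qed.

Lemma modeT_zero X (n : 'I_(size (tdim X))) J (A : 'M_(J, nth 0%N (tdim X) n)) :
  tval X =1 (fun _ => 0) -> tval (modeT A) =1 (fun _ => 0).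
Proof.
move=> X0 i /=; case: ifP => // _.
by rewrite big1 // => t _; rewrite X0 mul0r.
Qed.

Lemma tval_modeT_delta X (n : 'I_(size (tdim X))) (t0 : 'I_(nth 0%N (tdim X) n)) j :
  inb (set_nth 0%N (tdim X) n 1) j ->
  tval (modeT (delta_mx (0 : 'I_1) t0)) j = tval X (set_nth 0%N j n t0).
Proof.
move=> jb; have jn1 : (nth 0%N j n < 1)%N.
  have [_ /(_ n)] := (inbE _ j).1 jb.
  by rewrite size_set_nth leq_max ltn_ord orbT nth_set_nth /= eqxx; apply.
rewrite /= jb (bigD1 t0) //= big1 ?addr0 => [|t tt0].
  case: insubP => [u _ _|]; last by rewrite jn1.
  by rewrite mxE ord1 !eqxx mulr1.
case: insubP => [u _ _|]; last by rewrite mulr0.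
by rewrite mxE (negbTE tt0) andbF mulr0.
Qed.

Inductive mode_reach X : tensor R -> Prop :=
| mode_reach_refl : mode_reach X X
| mode_reach_step Y (n : 'I_(size (tdim Y))) J (A : 'M_(J, nth 0%N (tdim Y) n)) :
    mode_reach X Y -> mode_reach X (modeT A).

Lemma mode_reach_zero X Y :
  tval X =1 (fun _ => 0) -> tval Y =1 (fun _ => 0) ->
  size (tdim X) = size (tdim Y) -> mode_reach X Y.
Proof.
move=> X0 Y0 sXY; set a := tdim X; set b := tdim Y.
suff reach k : (k <= size a)%N -> exists2 Z, mode_reach X Z &
    tval Z =1 (fun _ => 0) /\ tdim Z = interp 0%N a b k.
  have [Z XZ [Z0 dZ]] := reach _ (leqnn _); suff -> : Y = Z by [].
  by apply: tensor_ext => [|i]; rewrite ?dZ ?interp_size ?Y0 ?Z0.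
elim: k => [|k IH] ka.
  by exists X; [constructor | rewrite interp0].
have [Z XZ [Z0 dZ]] := IH (ltnW ka).
have kZ : (k < size (tdim Z))%N by rewrite dZ size_interp.
pose A : 'M[R]_(nth 0%N b k, nth 0%N (tdim Z) (Ordinal kZ)) := 0.
exists (modeT A); first exact: mode_reach_step.
by split; [exact: modeT_zero | rewrite /= dZ set_nth_interp].
Qed.

Lemma mode_reach_ones X i : inb (tdim X) i ->
  exists2 Z, mode_reach X Z &
    tdim Z = nseq (size (tdim X)) 1%N /\ tval Z (nseq (size (tdim X)) 0%N) = tval X i.
Proof.
move=> iX; set d := tdim X; set N := size d.
have [si lti] := (inbE d i).1 iX.
have s1 : size d = size (nseq N 1%N) by rewrite size_nseq.
have s0 : size i = size (nseq N 0%N) by rewrite size_nseq si.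
suff reach k : (k <= N)%N -> exists2 Z, mode_reach X Z &
    tdim Z = interp 0%N d (nseq N 1%N) k /\
    tval Z (interp 0%N i (nseq N 0%N) k) = tval X i.
  have [Z XZ [dZ vZ]] := reach _ (leqnn _).
  exists Z => //; split; first by rewrite dZ interp_size.
  by rewrite -vZ /N -[in X in interp _ _ _ X]si interp_size.
elim: k => [|k IH] kN; first by exists X; rewrite ?interp0 //; constructor.
have [Z XZ [dZ vZ]] := IH (ltnW kN).
have kZ : (k < size (tdim Z))%N by rewrite dZ size_interp.
have ikZ : (nth 0%N i k < nth 0%N (tdim Z) (Ordinal kZ))%N.
  by rewrite /= dZ nth_interp // ltnn; apply: lti.
exists (modeT (delta_mx (0 : 'I_1) (Ordinal ikZ))); first exact: mode_reach_step.
have dZ' : set_nth 0%N (tdim Z) k 1 = interp 0%N d (nseq N 1%N) k.+1.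
  by rewrite dZ -(set_nth_interp _ s1) // nth_nseq kN.
split; first by rewrite /= dZ'.
rewrite tval_modeT_delta ?dZ' ?inb_interp ?inb_ones //= -vZ.
by rewrite (set_nth_interpS _ s0) // si.
Qed.

Lemma rank_one_ones Z N :
  tdim Z = nseq N.+1 1%N -> tval Z (nseq N.+1 0%N) != 0 -> rank_one Z.
Proof.
move=> dZ Z0; exists (fun k _ => if k == 0%N then tval Z (nseq N.+1 0%N) else 1).
rewrite dZ size_nseq; split=> [k kN|j /inbE[sj ltj]].
  by exists 0%N; [rewrite nth_nseq kN | case: ifP; rewrite ?oner_eq0].
have -> : j = nseq N.+1 0%N.
  apply: (@eq_from_nth _ 0%N) => [|k]; rewrite sj !size_nseq // => kN.
  by move: (ltj k); rewrite size_nseq !nth_nseq kN ltnS leqn0 => /(_ isT) /eqP.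
by rewrite big_ord_recl /= big1 ?mulr1.
Qed.

Section RankFunction.
Variable r : tensor R -> nat.
Hypothesis r_modeT : forall X (n : 'I_(size (tdim X))) J
  (A : 'M_(J, nth 0%N (tdim X) n)), (r (modeT A) <= r X)%N.

Lemma rank_mode_reach X Y : mode_reach X Y -> (r Y <= r X)%N.
Proof. by elim=> // Y' n J A _ /(leq_trans (r_modeT A)). Qed.

Hypothesis r_idT : forall M n, r (idT R M n) = M.
Hypothesis r_extT : forall X, r X = r (extT X).

Lemma rank_zero X : tval X =1 (fun _ => 0) -> r X = 0%N.
Proof.
have rank0 Y : tval Y =1 (fun _ => 0) -> (2 <= size (tdim Y))%N -> r Y = 0%N.
  move=> Y0; case sY: (size (tdim Y)) => [|[|n]] // _.
  have O0 : tval (idT R 0 n) =1 (fun _ => 0).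
    by move=> i /=; case: ifP => // /inbE[_ /(_ 0%N isT)].
  apply/eqP; rewrite -leqn0 -(r_idT 0 n) rank_mode_reach //.
  by apply: mode_reach_zero; rewrite // sY size_nseq.
move=> X0; case sX: (size (tdim X)) => [|[|n]]; last by rewrite rank0 ?sX.
  by move: (tdim_gt0 X); rewrite sX.
rewrite r_extT rank0 ?size_rcons ?sX // => i /=.
by case: ifP; rewrite ?X0.
Qed.

Hypothesis r_rank_one : forall X, r X = 1%N <-> rank_one X.

Lemma rank_gt0 X i : inb (tdim X) i -> tval X i != 0 -> (0 < r X)%N.
Proof.
move=> iX Xi; have [Z XZ [dZ vZ]] := mode_reach_ones iX.
move: dZ vZ; case sX: (size (tdim X)) => [|N]; first by move: (tdim_gt0 X); rewrite sX.
move=> dZ vZ; rewrite -vZ in Xi.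
by rewrite -(r_rank_one Z).2 ?rank_mode_reach //; exact: rank_one_ones Xi.
Qed.

End RankFunction.
End Tensors.

Theorem proposition4p3 (R : realType) (r : tensor R -> nat) :
  is_tensor_rank_fn r -> forall X : tensor R, r X = 0%N <-> X = zeroT X.
Proof.
move=> [r_rank_one [r_idT [_ [r_extT [_ r_modeT]]]]] X.
rewrite eq_zeroT; split=> [rX0 i|]; last exact: rank_zero.
have [//|Xi] := eqVneq (tval X i) 0.
have [iX|iX] := boolP (inb (tdim X) i); last by rewrite tval_out.
by have := rank_gt0 r_modeT r_rank_one iX Xi; rewrite rX0.
Qed.
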